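(* Consider two symmetric platforms with common effective driver arrival rate $e>0$ and common abandonment rate $\beta>0$, static prices $\phi_1,\phi_2\in[0,\phi_h]$, and total passenger rate $\Lambda>0$. The (unique) Wardrop equilibrium under the QoS metric $\mathcal D$ is $$(\lambda_1,\lambda_2)=\Bigl(\frac{\Lambda f(\phi_2)}{f(\phi_1)+f(\phi_2)},\ \frac{\Lambda f(\phi_1)}{f(\phi_1)+f(\phi_2)}\Bigr).$$
   Context: $f:[0,\phi_h]\to(0,1]$ is strictly concave, strictly decreasing, differentiable, $f(0)=1$. For platform $i$ with passenger rate $\lambda_i$, $\mathcal D_i(\lambda_i)=\bigl(\sum_{n\ge0}\frac{e^n}{\prod_{a=1}^n(\lambda_i f(\phi_i)+a\beta)}\bigr)^{-1}$ is the stationary probability of no waiting driver. The Wardrop equilibrium under QoS $\mathcal D$ is $\lambda_1\in\arg\min_{\lambda\in[0,\Lambda]}(\mathcal D_1(\lambda)-\mathcal D_2(\Lambda-\lambda))^2$, $\lambda_2=\Lambda-\lambda_1$. *)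

From Stdlib Require Import Reals.
From Coquelicot Require Import Coquelicot.
Open Scope R_scope.

Fixpoint rate_prod (x beta : R) (n : nat) : R :=
  match n with
  | O => 1
  | S m => rate_prod x beta m * (x + INR (S m) * beta)
  end.

Definition QoS_D (e beta : R) (f : R -> R) (phi lam : R) : R :=
  / Series (fun n => e ^ n / rate_prod (lam * f phi) beta n).

Definition wardrop_eq_D (e beta : R) (f : R -> R) (phi1 phi2 Lam lam1 lam2 : R) : Prop :=
  (0 <= lam1 <= Lam /\
   forall lam, 0 <= lam <= Lam ->
     (QoS_D e beta f phi1 lam1 - QoS_D e beta f phi2 (Lam - lam1)) ^ 2
     <= (QoS_D e beta f phi1 lam - QoS_D e beta f phi2 (Lam - lam)) ^ 2)
  /\ lam2 = Lam - lam1.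

(* The QoS of platform i is D_i(lam) = 1 / S(lam f(phi_i)), where S(x) is the
   normalising series of the driver queue. Each term e^n / prod_{a<=n} (x + a beta)
   is nonincreasing in x and the n = 1 term strictly decreasing, so S is injective
   on [0, oo). Hence D_1(lam) = D_2(Lam - lam) exactly when
   lam f(phi_1) = (Lam - lam) f(phi_2), i.e. at lam = Lam f(phi_2) / (f(phi_1) + f(phi_2)),
   which lies in [0, Lam]; there the squared gap vanishes, so it is the unique minimiser. *)

From Stdlib Require Import Reals Lra.
From Coquelicot Require Import Coquelicot.
Open Scope R_scope.

Lemma Series_lt (a b : nat -> R) (k : nat) :
  (forall n, 0 <= a n <= b n) -> a k < b k -> ex_series b -> Series a < Series b.
Proof.
  revert a b; induction k as [|k IH]; intros a b Hab Hk Hb.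
  all: assert (Ha : ex_series a)
         by (apply (ex_series_le a b); [|exact Hb];
             intros n; change (Rabs (a n) <= b n); rewrite Rabs_pos_eq; apply Hab).
  all: rewrite (Series_incr_1 a Ha), (Series_incr_1 b Hb).
  all: pose proof (proj1 (ex_series_incr_1 b) Hb) as Hb1.
  - assert (Series (fun n => a (S n)) <= Series (fun n => b (S n)))
      by (apply Series_le; [intros n; apply Hab | exact Hb1]).
    lra.
  - assert (Series (fun n => a (S n)) < Series (fun n => b (S n)))
      by (apply IH; [intros n; apply Hab | exact Hk | exact Hb1]).
    specialize (Hab 0%nat); lra.
Qed.

Section RateProduct.

Variable beta : R.
Hypothesis Hbeta : 0 < beta.

Lemma rate_prod_ge_fact (x : R) (n : nat) :
  0 <= x -> beta ^ n * INR (Factorial.fact n) <= rate_prod x beta n.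
Proof.
  intros Hx; induction n as [|n IH]; cbn [rate_prod pow]; [simpl; lra|].
  change (Factorial.fact (S n)) with (S n * Factorial.fact n)%nat.
  rewrite mult_INR, (S_INR n).
  assert (0 <= beta ^ n * INR (Factorial.fact n))
    by (apply Rmult_le_pos; [apply pow_le; lra | apply pos_INR]).
  assert (0 <= INR n) by apply pos_INR.
  apply Rle_trans with (beta ^ n * INR (Factorial.fact n) * ((INR n + 1) * beta));
    [nra | apply Rmult_le_compat; nra].
Qed.

Lemma rate_prod_gt0 (x : R) (n : nat) : 0 <= x -> 0 < rate_prod x beta n.
Proof.
  intros Hx; eapply Rlt_le_trans; [|exact (rate_prod_ge_fact x n Hx)].
  apply Rmult_lt_0_compat; [apply pow_lt; lra | apply INR_fact_lt_0].
Qed.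

Lemma rate_prod_le_compat (x y : R) (n : nat) :
  0 <= x <= y -> rate_prod x beta n <= rate_prod y beta n.
Proof.
  intros Hxy; induction n as [|n IH]; cbn [rate_prod]; [lra|].
  assert (0 <= INR (S n)) by apply pos_INR.
  pose proof (rate_prod_gt0 x n (proj1 Hxy)).
  apply Rmult_le_compat; nra.
Qed.

End RateProduct.

Section QueueSeries.

Variables (e beta : R).
Hypotheses (He : 0 < e) (Hbeta : 0 < beta).

Definition queue_term (x : R) (n : nat) : R := e ^ n / rate_prod x beta n.

Lemma queue_term_ge0 (x : R) (n : nat) : 0 <= x -> 0 <= queue_term x n.
Proof.
  intros Hx; apply Rle_mult_inv_pos;
    [apply pow_le; lra | exact (rate_prod_gt0 beta Hbeta x n Hx)].
Qed.

Lemma queue_term_le_compat (x y : R) (n : nat) :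
  0 <= x <= y -> queue_term y n <= queue_term x n.
Proof.
  intros Hxy; apply Rmult_le_compat_l; [apply pow_le; lra|].
  apply Rinv_le_contravar; [exact (rate_prod_gt0 beta Hbeta x n (proj1 Hxy))|].
  exact (rate_prod_le_compat beta Hbeta x y n Hxy).
Qed.

Lemma queue_term1_lt (x y : R) : 0 <= x < y -> queue_term y 1 < queue_term x 1.
Proof.
  intros Hxy; unfold queue_term; cbn [rate_prod pow INR]; rewrite !Rmult_1_l, !Rmult_1_r.
  apply Rmult_lt_compat_l; [lra | apply Rinv_lt_contravar; nra].
Qed.

(* Dominated by the exponential series of e / beta, since rate_prod x beta n >= beta^n n!. *)
Lemma ex_series_queue_term (x : R) : 0 <= x -> ex_series (queue_term x).
Proof.
  intros Hx.
  apply (ex_series_le (K := R_AbsRing) (V := R_CompleteNormedModule) _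
           (fun n => scal ((e / beta) ^ n) (/ INR (Factorial.fact n))));
    [|eexists; apply is_exp_Reals].
  intros n; change (Rabs (queue_term x n) <= (e / beta) ^ n * / INR (Factorial.fact n)).
  rewrite Rabs_pos_eq by exact (queue_term_ge0 x n Hx).
  unfold queue_term, Rdiv.
  rewrite Rpow_mult_distr, pow_inv, Rmult_assoc, <- Rinv_mult.
  apply Rmult_le_compat_l; [apply pow_le; lra|].
  apply Rinv_le_contravar; [|exact (rate_prod_ge_fact beta Hbeta x n Hx)].
  apply Rmult_lt_0_compat; [apply pow_lt; lra | apply INR_fact_lt_0].
Qed.

Lemma queue_series_decr (x y : R) :
  0 <= x < y -> Series (queue_term y) < Series (queue_term x).
Proof.
  intros Hxy; apply (Series_lt _ _ 1).
  - intros n; split; [apply queue_term_ge0; lra | apply queue_term_le_compat; lra].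
  - exact (queue_term1_lt x y Hxy).
  - apply ex_series_queue_term; lra.
Qed.

Lemma queue_series_inj (x y : R) :
  0 <= x -> 0 <= y -> Series (queue_term x) = Series (queue_term y) -> x = y.
Proof.
  intros Hx Hy Heq; destruct (Rtotal_order x y) as [Hlt|[Hxy|Hlt]]; [|exact Hxy|].
  - pose proof (queue_series_decr x y (conj Hx Hlt)); lra.
  - pose proof (queue_series_decr y x (conj Hy Hlt)); lra.
Qed.

End QueueSeries.

Lemma QoS_D_eq_iff (e beta : R) (f : R -> R) (phi1 phi2 x y : R) :
  0 < e -> 0 < beta -> 0 <= x * f phi1 -> 0 <= y * f phi2 ->
  QoS_D e beta f phi1 x = QoS_D e beta f phi2 y <-> x * f phi1 = y * f phi2.
Proof.
  intros He Hbeta Hx Hy; unfold QoS_D; split; [|intros ->; reflexivity].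
  intros Heq; apply Rinv_eq_reg in Heq.
  exact (queue_series_inj e beta He Hbeta _ _ Hx Hy Heq).
Qed.

Lemma sq_minimizer_iff_root (P : R -> Prop) (g : R -> R) (z x : R) :
  P z -> g z = 0 ->
  (P x /\ forall y, P y -> g x ^ 2 <= g y ^ 2) <-> (P x /\ g x = 0).
Proof.
  intros Pz gz; split; intros [Px Hx]; split; [exact Px| |exact Px|].
  - specialize (Hx z Pz); rewrite gz in Hx; nra.
  - intros y _; rewrite Hx; simpl; nra.
Qed.

Theorem lemma5 (f : R -> R) (phi_h e beta Lam phi1 phi2 : R)
  (Hphih : 0 < phi_h)
  (Hrange : forall x, 0 <= x <= phi_h -> 0 < f x <= 1)
  (Hf0 : f 0 = 1)
  (Hdecr : forall x y, 0 <= x -> x < y -> y <= phi_h -> f y < f x)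
  (Hconc : forall x y t, 0 <= x <= phi_h -> 0 <= y <= phi_h -> x <> y ->
             0 < t < 1 -> t * f x + (1 - t) * f y < f (t * x + (1 - t) * y))
  (Hdiff : forall x, 0 < x < phi_h -> ex_derive f x)
  (He : 0 < e) (Hbeta : 0 < beta) (HLam : 0 < Lam)
  (Hphi1 : 0 <= phi1 <= phi_h) (Hphi2 : 0 <= phi2 <= phi_h) :
  forall lam1 lam2 : R,
    wardrop_eq_D e beta f phi1 phi2 Lam lam1 lam2 <->
    (lam1 = Lam * f phi2 / (f phi1 + f phi2) /\
     lam2 = Lam * f phi1 / (f phi1 + f phi2)).
Proof.
  intros lam1 lam2.
  pose proof (proj1 (Hrange phi1 Hphi1)) as Hf1.
  pose proof (proj1 (Hrange phi2 Hphi2)) as Hf2.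
  set (ls := Lam * f phi2 / (f phi1 + f phi2)).
  set (gap := fun l => QoS_D e beta f phi1 l - QoS_D e beta f phi2 (Lam - l)).
  assert (balance_iff : forall l, l * f phi1 = (Lam - l) * f phi2 <-> l = ls)
    by (intros l; unfold ls; split; intros Hl; [field_simplify_eq; lra | subst l; field]; lra).
  assert (ls_compl : Lam - ls = Lam * f phi1 / (f phi1 + f phi2)) by (unfold ls; field; lra).
  assert (ls_range : 0 <= ls <= Lam).
  { assert (0 <= Lam * f phi1 / (f phi1 + f phi2)) by (apply Rdiv_le_0_compat; nra).
    assert (0 <= ls) by (apply Rdiv_le_0_compat; nra).
    lra. }
  assert (gap_root_iff : forall l, 0 <= l <= Lam -> gap l = 0 <-> l = ls).
  { intros l Hl; unfold gap.
    rewrite <- balance_iff, <- (QoS_D_eq_iff e beta) by nra; split; lra. }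
  pose proof (sq_minimizer_iff_root (fun l => 0 <= l <= Lam) gap ls lam1 ls_range
                (proj2 (gap_root_iff ls ls_range) eq_refl)) as Hmin.
  cbv beta in Hmin; unfold gap in Hmin.
  unfold wardrop_eq_D; rewrite Hmin; fold (gap lam1).
  split.
  - intros [[Hl Hgap] ->]; apply (gap_root_iff _ Hl) in Hgap.
    split; [exact Hgap | rewrite Hgap; exact ls_compl].
  - intros [-> ->]; split; [split; [exact ls_range | apply gap_root_iff; auto] |].
    exact (eq_sym ls_compl).
Qed.
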